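(* Let $d\ge2$ and let $\ell=\overline{xy}$ be a critical leaf of a sibling $\sigma_d$-invariant lamination $\mathcal L$ such that $x$ is periodic under $\sigma_d$. Then $\ell$ is isolated in $\mathcal L$ (it is not a Hausdorff limit of other leaves of $\mathcal L$).
   Context: $\mathbb S$ is the unit circle, $\sigma_d(z)=z^d$. A chord $\overline{ab}$ joins $a,b\in\mathbb S$; distinct chords cross if they meet in the open unit disk; a chord is critical if $a\ne b$ and $\sigma_d(a)=\sigma_d(b)$. A lamination is a family of pairwise non-crossing chords (leaves) containing all points of $\mathbb S$, whose union is closed. It is sibling $\sigma_d$-invariant if (1) images of leaves are leaves; (2) every leaf is the image of some leaf; (3) for every non-critical leaf $\ell$ there exist $d$ pairwise disjoint leaves $\ell_1=\ell,\dots,\ell_d$ with equal $\sigma_d$-images. *)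

From HB Require Import structures.
From mathcomp Require Import all_boot all_order all_algebra.
From mathcomp Require Import complex.
From mathcomp Require Import all_classical all_reals.
Set Implicit Arguments. Unset Strict Implicit. Unset Printing Implicit Defensive.
Import Order.TTheory GRing.Theory Num.Theory.
Local Open Scope ring_scope.
Local Open Scope complex_scope.

Section Lam.
Variable R : realType.
Local Notation C := R[i].

Definition on_circle (z : C) : Prop := Normc.normc z = 1.
Definition in_open_disk (z : C) : Prop := Normc.normc z < 1.
Definition sigma (d : nat) (z : C) : C := z ^+ d.

Definition seg (a b : C) : set C :=
  fun z => exists t : R, 0 <= t <= 1 /\ z = (1 - t)%:C * a + t%:C * b.

Definition same_chord (a b c e : C) : Prop :=
  (a = c /\ b = e) \/ (a = e /\ b = c).

Definition cross (a b c e : C) : Prop :=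
  ~ same_chord a b c e /\ exists z, seg a b z /\ seg c e z /\ in_open_disk z.

Definition critical (d : nat) (a b : C) : Prop := a <> b /\ sigma d a = sigma d b.

(* a family of chords, given by a relation on endpoints; the chord ab is in
   the family if L a b or L b a *)
Definition leaf (L : C -> C -> Prop) (a b : C) : Prop := L a b \/ L b a.

Definition closed_in_plane (A : set C) : Prop :=
  forall z, (forall e : R, 0 < e -> exists w, A w /\ Normc.normc (z - w) < e) -> A z.

Definition lamination (L : C -> C -> Prop) : Prop :=
  [/\ (forall a b, leaf L a b -> on_circle a /\ on_circle b),
      (forall a b c e, leaf L a b -> leaf L c e -> ~ cross a b c e),
      (forall a, on_circle a -> leaf L a a) &
      closed_in_plane (fun z => exists a b, leaf L a b /\ seg a b z)].

Definition sibling_invariant (d : nat) (L : C -> C -> Prop) : Prop :=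
  [/\ lamination L,
      (forall a b, leaf L a b -> leaf L (sigma d a) (sigma d b)),
      (forall a b, leaf L a b -> exists c e, leaf L c e /\
           same_chord (sigma d c) (sigma d e) a b) &
      (forall a b, leaf L a b -> ~ critical d a b ->
         exists f : 'I_d -> C * C,
           [/\ (forall i, leaf L (f i).1 (f i).2),
               (forall i : 'I_d, nat_of_ord i = 0%N -> same_chord (f i).1 (f i).2 a b),
               (forall i j, i <> j -> forall z, seg (f i).1 (f i).2 z -> seg (f j).1 (f j).2 z -> False) &
               (forall i, same_chord (sigma d (f i).1) (sigma d (f i).2) (sigma d a) (sigma d b))])].

Definition periodic (d : nat) (x : C) : Prop :=
  exists n : nat, (0 < n)%N /\ iter n (sigma d) x = x.

Definition hclose (A B : set C) (e : R) : Prop :=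
  (forall a, A a -> exists b, B b /\ Normc.normc (a - b) <= e) /\
  (forall b, B b -> exists a, A a /\ Normc.normc (a - b) <= e).

Definition hausdorff_limit (u : nat -> C * C) (x y : C) : Prop :=
  forall e : R, 0 < e -> exists N, forall n, (N <= n)%N ->
    hclose (seg (u n).1 (u n).2) (seg x y) e.

Definition isolated (L : C -> C -> Prop) (x y : C) : Prop :=
  ~ exists u : nat -> C * C,
      (forall n, leaf L (u n).1 (u n).2 /\ ~ same_chord (u n).1 (u n).2 x y) /\
      hausdorff_limit u x y.

End Lam.

From HB Require Import structures.
From mathcomp Require Import all_boot all_order all_algebra.
From mathcomp Require Import complex.
From mathcomp Require Import all_classical all_reals.
From mathcomp.algebra_tactics Require Import ring lra.

(* Let leaves [ab] accumulate on the critical leaf [xy], where [x] has period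
   [p], and write [a = x u], [b = y v] with [u], [v] rotations close to [1].
   As [sigma d] identifies [x] and [y], [sigma^p] maps [ab] to the leaf from
   [x u^N] to [x v^N], [N = d^p], still short when [ab] is close to [xy].
   If [u] and [v] turn the same way, [ab] crosses [xy]; if they turn opposite
   ways, the image leaf crosses [xy]; if only [u] turns, the image leaf crosses
   [ab].  If only [v] turns, the image is the non-critical leaf from [x] to
   [x eta], [eta = v^N], whose [d] siblings join the preimages of [sigma d x]
   to those of [sigma d (x eta)], i.e. to the former turned by [eta].  The
   siblings do not cross the leaf [x b], so each keeps its endpoints on one
   side of it; but turning by [eta] moves exactly one preimage, [y], across
   [x b], and counting the preimages on the side of [y] gives a contradiction. *)

Set Implicit Arguments. Unset Strict Implicit. Unset Printing Implicit Defensive.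
Import Order.TTheory GRing.Theory Num.Theory.
Local Open Scope ring_scope.
Local Open Scope complex_scope.

Section Signs.
Variable R : realType.
Implicit Types s t : R.

Lemma same_sign_gt0 s1 s2 t : 0 < s1 * s2 -> (0 < s1 * t) = (0 < s2 * t).
Proof. by move=> h; apply/idP/idP => h'; nra. Qed.

Lemma sign_transfer_lt0 s1 s2 t1 t2 : 0 < s1 * t1 -> 0 < s2 * t2 ->
  (s1 * s2 < 0) = (t1 * t2 < 0).
Proof. by move=> h1 h2; apply/idP/idP => h; nra. Qed.

Lemma near_sign_gt0 s0 s1 s2 r1 r2 : `|s1 - s0| <= r1 -> `|s2 - s1| <= r2 ->
  r1 + r2 < `|s0| -> 0 < s1 * s2.
Proof.
rewrite !ler_norml => /andP[h1 h2] /andP[h3 h4].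
case: (lerP 0 s0) => hs0; [rewrite ger0_norm // | rewrite ltr0_norm //] => hr.
- by apply: mulr_gt0; lra.
- by rewrite -mulrNN; apply: mulr_gt0; lra.
Qed.

End Signs.

Section PlaneGeometry.
Variable R : realType.
Local Notation C := R[i].
Local Notation Re := complex.Re.
Local Notation Im := complex.Im.
Local Notation nc := Normc.normc.
Implicit Types (z w a b c e t u : C) (s : R).

Lemma ReD z w : Re (z + w) = Re z + Re w. Proof. by case: z => ? ?; case: w. Qed.
Lemma ImD z w : Im (z + w) = Im z + Im w. Proof. by case: z => ? ?; case: w. Qed.
Lemma ReB z w : Re (z - w) = Re z - Re w. Proof. by case: z => ? ?; case: w. Qed.
Lemma ImB z w : Im (z - w) = Im z - Im w. Proof. by case: z => ? ?; case: w. Qed.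
Lemma ReM z w : Re (z * w) = Re z * Re w - Im z * Im w.
Proof. by case: z => ? ?; case: w. Qed.
Lemma ImM z w : Im (z * w) = Re z * Im w + Im z * Re w.
Proof. by case: z => ? ?; case: w => ? ? /=; ring. Qed.
Lemma ReCM s z : Re (s%:C * z) = s * Re z. Proof. by rewrite ReM /= mul0r subr0. Qed.
Lemma ImCM s z : Im (s%:C * z) = s * Im z. Proof. by rewrite ImM /= mul0r addr0. Qed.
Lemma ReJ z : Re z^* = Re z. Proof. by case: z. Qed.
Lemma ImJ z : Im z^* = - Im z. Proof. by case: z. Qed.

Lemma complex_ext z w : Re z = Re w -> Im z = Im w -> z = w.
Proof. by case: z; case: w => /= ? ? ? ? -> ->. Qed.

Definition normsq z := Re z ^+ 2 + Im z ^+ 2.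

(* [dotc a z] and [detc a z] are the dot and cross products of [a] and [z]
   viewed as plane vectors; [side a b z] is the cross product of [b - a] and
   [z - a], whose sign tells on which side of the line [ab] the point [z] is. *)
Definition dotc a z := Re z * Re a + Im z * Im a.
Definition detc a z := Im z * Re a - Re z * Im a.
Definition side a b z := (Re b - Re a) * (Im z - Im a) - (Im b - Im a) * (Re z - Re a).

Lemma dotcC a z : dotc a z = dotc z a. Proof. by rewrite /dotc; ring. Qed.

Lemma normcE z : nc z = Num.sqrt (normsq z). Proof. by case: z. Qed.
Lemma normsq_ge0 z : 0 <= normsq z. Proof. by rewrite addr_ge0 ?sqr_ge0. Qed.
Lemma nc_ge0 z : 0 <= nc z. Proof. by rewrite normcE sqrtr_ge0. Qed.
Lemma sqr_nc z : nc z ^+ 2 = normsq z. Proof. by rewrite normcE sqr_sqrtr ?normsq_ge0. Qed.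

Lemma on_circleE z : on_circle z <-> normsq z = 1.
Proof.
rewrite /on_circle normcE; split => [h|->]; last by rewrite sqrtr1.
by rewrite -(sqr_sqrtr (normsq_ge0 z)) h expr1n.
Qed.

Lemma nc_unit z : normsq z = 1 -> nc z = 1. Proof. by rewrite normcE => ->; rewrite sqrtr1. Qed.

Lemma nc_le z s : 0 <= s -> normsq z <= s ^+ 2 -> nc z <= s.
Proof. move=> hs; rewrite -sqr_nc => h; have := nc_ge0 z; nra. Qed.

Lemma Re_nc z : - nc z <= Re z <= nc z.
Proof. have := sqr_nc z; have := nc_ge0 z; rewrite /normsq => h1 h2; apply/andP; split; nra. Qed.

Lemma Im_nc z : - nc z <= Im z <= nc z.
Proof. have := sqr_nc z; have := nc_ge0 z; rewrite /normsq => h1 h2; apply/andP; split; nra. Qed.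

Lemma normsq_eq0 z : normsq z = 0 -> z = 0.
Proof. rewrite /normsq => h; apply: complex_ext => /=; nra. Qed.

Lemma normsqB_gt0 z w : z <> w -> 0 < normsq (z - w).
Proof.
move=> hne; rewrite lt_def normsq_ge0 andbT; apply/eqP => /normsq_eq0 /eqP.
by rewrite subr_eq0 => /eqP.
Qed.

Lemma normsqM z w : normsq (z * w) = normsq z * normsq w.
Proof. by rewrite /normsq ReM ImM; ring. Qed.

Lemma normsqJ z : normsq z^* = normsq z. Proof. by rewrite /normsq ReJ ImJ sqrrN. Qed.

Lemma unit_neq0 z : normsq z = 1 -> z != 0.
Proof.
move=> h; apply/eqP => z0; move: h; rewrite z0 /normsq /= expr0n addr0 => /eqP.
by rewrite eq_sym oner_eq0.
Qed.

Lemma unit_expr u k : normsq u = 1 -> normsq (u ^+ k) = 1.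
Proof.
move=> hu; elim: k => [|k ih]; first by rewrite /normsq /= expr0n expr1n addr0.
by rewrite exprSr normsqM ih hu mulr1.
Qed.

Lemma unit_mulJ u : normsq u = 1 -> u * u^* = 1.
Proof.
rewrite /normsq => hu; apply: complex_ext; rewrite ?ReM ?ImM ReJ ImJ /=; last by ring.
by rewrite -hu; ring.
Qed.

Lemma unit_rotK z a : normsq z = 1 -> z * (a * z^*) = a.
Proof. by move=> hz; rewrite mulrCA unit_mulJ // mulr1. Qed.

Lemma nc_rotB1 z a : normsq z = 1 -> nc (a * z^* - 1) = nc (a - z).
Proof.
move=> hz; have -> : a - z = z * (a * z^* - 1) by rewrite mulrBr mulr1 unit_rotK.
by rewrite Normc.normcM (nc_unit hz) mul1r.
Qed.

Lemma ncB_rot z u : normsq z = 1 -> nc (z * u - z) = nc (u - 1).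
Proof. by move=> hz; rewrite -{2}[z]mulr1 -mulrBr Normc.normcM nc_unit // mul1r. Qed.

Lemma mulr_unitJK z t : normsq t = 1 -> z * t * t^* = z.
Proof. by move=> ht; rewrite -mulrA unit_mulJ // mulr1. Qed.

Lemma unit_Im0 u : normsq u = 1 -> 0 <= Re u -> Im u = 0 -> u = 1.
Proof. by rewrite /normsq => hu hr hi; apply: complex_ext => //=; rewrite hi in hu; nra. Qed.

Lemma det_sqr_le s1 s2 s3 s4 :
  (s1 * s4 - s2 * s3) ^+ 2 <= (s1 ^+ 2 + s2 ^+ 2) * (s3 ^+ 2 + s4 ^+ 2).
Proof.
have e : (s1 ^+ 2 + s2 ^+ 2) * (s3 ^+ 2 + s4 ^+ 2) - (s1 * s4 - s2 * s3) ^+ 2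
    = (s1 * s3 + s2 * s4) ^+ 2 by ring.
by rewrite -subr_ge0 e sqr_ge0.
Qed.

Lemma ncB_unit_le2 z w : normsq z = 1 -> normsq w = 1 -> nc (z - w) <= 2.
Proof.
move=> hz hw; apply: nc_le; first by rewrite ler0n.
move: hz hw; rewrite /normsq ReB ImB => hz hw.
by have := det_sqr_le (Re z) (Im z) (- Im w) (Re w); nra.
Qed.

Lemma normsqB_unit a z : normsq a = 1 -> normsq z = 1 -> normsq (a - z) = 2 * (1 - dotc a z).
Proof.
move=> ha hz; have -> : normsq (a - z) = normsq a + normsq z - 2 * dotc a z.
  by rewrite /normsq /dotc !ReB !ImB; ring.
by rewrite ha hz; ring.
Qed.

Lemma detc_dotc a z : normsq a = 1 -> normsq z = 1 -> detc a z ^+ 2 + dotc a z ^+ 2 = 1.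
Proof.
move=> ha hz; have -> : detc a z ^+ 2 + dotc a z ^+ 2 = normsq a * normsq z.
  by rewrite /detc /dotc /normsq; ring.
by rewrite ha hz mulr1.
Qed.

Lemma normsq_triangle2 z w c : normsq (z - c) <= 2 * normsq (z - w) + 2 * normsq (w - c).
Proof.
rewrite /normsq !ReB !ImB.
have sq2 s1 s2 s3 : (s1 - s3) ^+ 2 <= 2 * (s1 - s2) ^+ 2 + 2 * (s2 - s3) ^+ 2.
  by have := sqr_ge0 (s1 - 2 * s2 + s3); nra.
have := sq2 (Re z) (Re w) (Re c); have := sq2 (Im z) (Im w) (Im c); lra.
Qed.

Lemma seg_comb a b s : 0 <= s <= 1 -> seg a b ((1 - s)%:C * a + s%:C * b).
Proof. by exists s. Qed.

Lemma seg_left a b : seg a b a.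
Proof. by exists 0; rewrite lexx ler01 subr0 mul0r addr0 mul1r. Qed.

Lemma seg_right a b : seg a b b.
Proof. by exists 1; rewrite lexx ler01 subrr mul0r add0r mul1r. Qed.

Lemma side_comb a b c e s :
  side a b ((1 - s)%:C * c + s%:C * e) = (1 - s) * side a b c + s * side a b e.
Proof. by rewrite /side ReD ImD !ReCM !ImCM; ring. Qed.

Lemma side_aa a z : side a a z = 0. Proof. by rewrite /side; ring. Qed.
Lemma side_a a b : side a b a = 0. Proof. by rewrite /side; ring. Qed.
Lemma side_b a b : side a b b = 0. Proof. by rewrite /side; ring. Qed.
Lemma sideC a b z : side b a z = - side a b z. Proof. by rewrite /side; ring. Qed.

Lemma normsq_comb a b s : normsq a = 1 -> normsq b = 1 ->
  normsq ((1 - s)%:C * a + s%:C * b) = 1 - s * (1 - s) * normsq (a - b).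
Proof.
move=> ha hb; apply/eqP; rewrite -subr_eq0; apply/eqP.
have -> : normsq ((1 - s)%:C * a + s%:C * b) - (1 - s * (1 - s) * normsq (a - b))
   = (1 - s) * (normsq a - 1) + s * (normsq b - 1).
  by rewrite /normsq ReD ImD !ReCM !ImCM !ReB !ImB; ring.
by rewrite ha hb subrr !mulr0 addr0.
Qed.

Lemma side_eq0_line a b w : a <> b -> side a b w = 0 ->
  exists s, w = (1 - s)%:C * a + s%:C * b.
Proof.
move=> hab hs; set n := normsq (b - a).
have hn : n != 0 by rewrite gt_eqF // normsqB_gt0 // => /esym.
set dot := (Re b - Re a) * (Re w - Re a) + (Im b - Im a) * (Im w - Im a).
have nE : n = (Re b - Re a) ^+ 2 + (Im b - Im a) ^+ 2 by rewrite /n /normsq ReB ImB.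
exists (dot / n); move: hs; rewrite /side => hs.
have eRe : (Re w - Re a) * n = (Re b - Re a) * dot.
  by apply/eqP; rewrite -subr_eq0 nE /dot; apply/eqP; rewrite -[RHS](mulr0 (Im a - Im b)) -hs; ring.
have eIm : (Im w - Im a) * n = (Im b - Im a) * dot.
  by apply/eqP; rewrite -subr_eq0 nE /dot; apply/eqP; rewrite -[RHS](mulr0 (Re b - Re a)) -hs; ring.
apply: complex_ext; rewrite ?ReD ?ImD ?ReCM ?ImCM.
- have -> : Re w = Re a + (Re b - Re a) * dot / n by rewrite -eRe mulfK //; ring.
  by rewrite -mulrA; ring.
- have -> : Im w = Im a + (Im b - Im a) * dot / n by rewrite -eIm mulfK //; ring.
  by rewrite -mulrA; ring.
Qed.

Lemma side_eq0_circle a b z : normsq a = 1 -> normsq b = 1 -> normsq z = 1 -> a <> b ->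
  side a b z = 0 -> z = a \/ z = b.
Proof.
move=> ha hb hz hab /(side_eq0_line hab) [s zE].
have hn : 0 < normsq (a - b) by apply: normsqB_gt0.
move: hz; rewrite zE normsq_comb // => h.
have /eqP : s * (1 - s) * normsq (a - b) = 0 by lra.
rewrite mulf_eq0 (gt_eqF hn) orbF mulf_eq0 subr_eq0 => /orP[/eqP->|/eqP<-]; [left|right].
- by rewrite subr0 mul1r mul0r addr0.
- by rewrite subrr mul0r add0r mul1r.
Qed.

Lemma side_unit_neq0 a b z : normsq a = 1 -> normsq b = 1 -> normsq z = 1 -> a <> b ->
  z <> a -> z <> b -> side a b z != 0.
Proof. by move=> ha hb hz hab hza hzb; apply/eqP => /side_eq0_circle => /(_ ha hb hz hab) []. Qed.

(* The crossing point divides [ce] in the ratio of the two side values. *)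
Lemma cross_of_side a b c e : normsq a = 1 -> normsq b = 1 -> normsq c = 1 -> normsq e = 1 ->
  side a b c * side a b e < 0 -> cross a b c e.
Proof.
move=> ha hb hc he hneg.
set sc := side a b c in hneg *; set se := side a b e in hneg *.
have hab : a <> b by move=> eab; move: hneg; rewrite /sc /se eab !side_aa mul0r ltxx.
have hce : c <> e by move=> ece; move: hneg; rewrite /sc /se ece; nra.
split.
  by case=> -[eac ebe]; move: hneg; rewrite /sc ?eac ?ebe ?side_a ?side_b mul0r ltxx.
set s := sc / (sc - se).
have hD : sc - se != 0 by rewrite subr_eq0; apply/eqP => h; rewrite h in hneg; nra.
have hsD : s * (sc - se) = sc by rewrite /s divfK.
have hD2 : 0 < (sc - se) ^+ 2 by rewrite lt_def sqrf_eq0 hD sqr_ge0.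
have s0 : 0 < s.
  by rewrite -(pmulr_lgt0 _ hD2) expr2 mulrA hsD; nra.
have s1 : s < 1.
  by rewrite -subr_gt0 -(pmulr_lgt0 _ hD2) mulrBl mul1r expr2 mulrA hsD; nra.
set w := (1 - s)%:C * c + s%:C * e.
have hw1 : normsq w < 1.
  have s1' : 0 < 1 - s by rewrite subr_gt0.
  rewrite normsq_comb //; have := mulr_gt0 (mulr_gt0 s0 s1') (normsqB_gt0 hce); lra.
exists w; split; last split.
- have /(side_eq0_line hab) [r wE] : side a b w = 0 by rewrite side_comb -/sc -/se; lra.
  have hr : 0 < r * (1 - r).
    by move: hw1; rewrite wE normsq_comb //; have := normsqB_gt0 hab; nra.
  by exists r; split => //; apply/andP; split; nra.
- by apply: seg_comb; apply/andP; split; lra.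
- by rewrite /in_open_disk normcE -sqrtr1 ltr_sqrt //; lra.
Qed.

Lemma side_mul_rot a w t :
  side a w (a * t) = detc a w * (1 - Re t) - Im t * (normsq a - dotc a w).
Proof. by rewrite /side /detc /dotc /normsq ReM ImM; ring. Qed.

(* [t] is a rotation by an angle in [-pi/2, pi/2] whose sine is at most [G]. *)
Definition small_rot G t := [/\ normsq t = 1, 0 <= Re t & `|Im t| <= G].

Lemma small_rot_conj G t : small_rot G t -> small_rot G t^*.
Proof. by case=> ht hr hi; split; rewrite ?normsqJ ?ReJ ?ImJ ?normrN. Qed.

(* Turning [a] by a small angle moves it to the side of the chord [aw]
   prescribed by the direction of turning, as long as [w] is far from [a]. *)
Lemma side_small_rot a w t G : normsq a = 1 -> normsq w = 1 -> small_rot G t ->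
  G < 1 - dotc a w -> Im t != 0 -> side a w (a * t) * Im t < 0.
Proof.
move=> ha hw [ht hc]; rewrite ler_norml => /andP[hl hu] hG hs0.
rewrite side_mul_rot ha; have := detc_dotc ha hw; move: ht hc hl hu hG hs0; rewrite /normsq.
move: (detc a w) (dotc a w) (Re t) (Im t) => q pd c s ht hc hl hu hG hs0 hq.
have hq1 : -1 <= q <= 1 by apply/andP; split; nra.
have h1c : 1 - c <= s ^+ 2 by nra.
have [hsn|hsp] : s < 0 \/ 0 < s by move: hs0; rewrite neq_lt => /orP[]; auto.
- have hs1 : - s < 1 - pd by lra.
  have : - s ^+ 2 <= q * (1 - c) by nra.
  have : s ^+ 2 < - s * (1 - pd) by rewrite expr2; nra.
  by move=> h1 h2; rewrite pmulr_rlt0 //; lra.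
- have hs1 : s < 1 - pd by lra.
  have : q * (1 - c) <= s ^+ 2 by nra.
  have : s ^+ 2 < s * (1 - pd) by rewrite expr2; nra.
  by move=> h1 h2; rewrite nmulr_rlt0 //; lra.
Qed.

Lemma ncB1_expr u k : normsq u = 1 -> nc (u ^+ k - 1) <= k%:R * nc (u - 1).
Proof.
move=> hu; elim: k => [|k ih]; first by rewrite expr0 subrr Normc.normc0 mul0r.
have -> : u ^+ k.+1 - 1 = (u ^+ k - 1) * u + (u - 1) by rewrite exprSr; ring.
apply: le_trans (le_normcD _ _) _.
by rewrite Normc.normcM (nc_unit hu) mulr1 -nat1r mulrDl mul1r addrC lerD2l.
Qed.

Lemma small_rot_expr u k G : normsq u = 1 -> k%:R * nc (u - 1) <= G -> G <= 1 / 2 ->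
  small_rot G (u ^+ k).
Proof.
move=> hu hk hG; have := ncB1_expr k hu.
have := Re_nc (u ^+ k - 1); have := Im_nc (u ^+ k - 1).
rewrite ReB ImB /= subr0 => /andP[hi1 hi2] /andP[hr1 _] hn.
by split; [exact: unit_expr | lra | rewrite ler_norml; apply/andP; split; lra].
Qed.

Lemma Im_expr_sign u K k : normsq u = 1 -> K%:R * nc (u - 1) <= 1 / 2 ->
  Im u != 0 -> (0 < k <= K)%N -> 0 < Im u * Im (u ^+ k).
Proof.
move=> hu hK hs; elim: k => [//|k ih] /andP[_ hk].
have hre j : (j <= K)%N -> 1 / 2 <= Re (u ^+ j).
  move=> hj; have := ncB1_expr j hu; have := Re_nc (u ^+ j - 1).
  rewrite ReB /= => /andP[h1 _] hn.
  have : j%:R * nc (u - 1) <= K%:R * nc (u - 1).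
    by apply: ler_wpM2r; [exact: nc_ge0 | rewrite ler_nat].
  lra.
have hs2 : 0 < Im u * Im u by rewrite -expr2 lt_def sqrf_eq0 hs sqr_ge0.
case: k ih hk => [|k] ih hk; first by rewrite expr1.
have {}ih := ih (ltnW hk).
have h1 := hre _ (ltnW hk); have h2 := hre 1%N (leq_trans (ltn0Sn k) (ltnW hk)).
rewrite expr1 in h2; rewrite exprSr ImM.
have -> : Im u * (Re (u ^+ k.+1) * Im u + Im (u ^+ k.+1) * Re u) =
  Re (u ^+ k.+1) * (Im u * Im u) + (Im u * Im (u ^+ k.+1)) * Re u by ring.
nra.
Qed.

Lemma dotc_near a z w : normsq w = 1 -> `|dotc a w - dotc z w| <= nc (a - z).
Proof.
move=> hw; have := sqr_nc (a - z); have := nc_ge0 (a - z).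
have := det_sqr_le (Re a - Re z) (Im a - Im z) (- Im w) (Re w).
move: hw; rewrite /normsq /dotc ReB ImB ler_norml => hw h1 h2 h3.
by apply/andP; split; nra.
Qed.

Lemma side_near_b a b b' z : `|side a b' z - side a b z| <= nc (b' - b) * nc (z - a).
Proof.
have h : (Re (b' - b) * Im (z - a) - Im (b' - b) * Re (z - a)) ^+ 2
    <= (nc (b' - b) * nc (z - a)) ^+ 2 by rewrite exprMn !sqr_nc; exact: det_sqr_le.
have -> : side a b' z - side a b z = (Re (b' - b)) * Im (z - a) - Im (b' - b) * Re (z - a).
  by rewrite /side !ReB !ImB; ring.
have := mulr_ge0 (nc_ge0 (b' - b)) (nc_ge0 (z - a)).
by rewrite ler_norml => h0; apply/andP; split; nra.
Qed.

Lemma side_near_z a b z z' : `|side a b z' - side a b z| <= nc (b - a) * nc (z' - z).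
Proof.
have h : (Re (b - a) * Im (z' - z) - Im (b - a) * Re (z' - z)) ^+ 2
    <= (nc (b - a) * nc (z' - z)) ^+ 2 by rewrite exprMn !sqr_nc; exact: det_sqr_le.
have -> : side a b z' - side a b z = (Re (b - a)) * Im (z' - z) - Im (b - a) * Re (z' - z).
  by rewrite /side !ReB !ImB; ring.
have := mulr_ge0 (nc_ge0 (b - a)) (nc_ge0 (z' - z)).
by rewrite ler_norml => h0; apply/andP; split; nra.
Qed.

(* A point [(1 - s) a + s b] close to the circle forces [s (1 - s) |a - b|^2]
   to be small. *)
Lemma seg_near_circle a b z w (e : R) : normsq a = 1 -> normsq b = 1 -> normsq z = 1 ->
  seg a b w -> nc (w - z) <= e -> 0 < e <= 1 ->
  normsq (a - z) <= 10 * e \/ normsq (b - z) <= 10 * e.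
Proof.
move=> ha hb hz [s [/andP[s0 s1] ->]] hw /andP[e0 e1].
set w0 := (1 - s)%:C * a + s%:C * b in hw *.
have hwz : normsq (w0 - z) <= e ^+ 2 by rewrite -sqr_nc; have := nc_ge0 (w0 - z); nra.
have hw0 : 1 - e <= nc w0.
  have : nc z <= nc w0 + nc (z - w0) by have := le_normcD w0 (z - w0); rewrite addrC subrK.
  by rewrite -[z - w0]opprB normcN (nc_unit hz); lra.
have hp : s * (1 - s) * normsq (a - b) <= 2 * e.
  have : 1 - 2 * e <= normsq w0 by rewrite -sqr_nc; have := nc_ge0 w0; nra.
  by rewrite normsq_comb //; lra.
have hee : e ^+ 2 <= e by rewrite expr2; nra.
have hab := normsq_ge0 (a - b).
have [hs|hs] := lerP s (1 / 2); [left|right].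
- have : normsq (a - w0) <= 4 * e.
    have -> : normsq (a - w0) = s ^+ 2 * normsq (a - b).
      by rewrite /w0 /normsq !ReB !ImB ReD ImD !ReCM !ImCM; ring.
    have : s ^+ 2 <= 2 * s * (1 - s) by nra.
    nra.
  have := normsq_triangle2 a w0 z; lra.
- have : normsq (b - w0) <= 4 * e.
    have -> : normsq (b - w0) = (1 - s) ^+ 2 * normsq (a - b).
      by rewrite /w0 /normsq !ReB !ImB ReD ImD !ReCM !ImCM; ring.
    have : (1 - s) ^+ 2 <= 2 * s * (1 - s) by nra.
    nra.
  have := normsq_triangle2 b w0 z; lra.
Qed.

Lemma hclose_near_end a b x y z (e : R) : normsq a = 1 -> normsq b = 1 -> normsq z = 1 ->
  0 < e <= 1 -> hclose (seg a b) (seg x y) (e ^+ 2 / 10) -> seg x y z ->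
  nc (a - z) <= e \/ nc (b - z) <= e.
Proof.
move=> ha hb hz /andP[e0 e1] [_ hcl] /hcl [w [hw hwz]].
have he : 0 < e ^+ 2 / 10 <= 1 by apply/andP; split; [rewrite divr_gt0 ?exprn_gt0 | nra].
have e10 : 10 * (e ^+ 2 / 10) = e ^+ 2 by field.
have [h|h] := seg_near_circle ha hb hz hw hwz he; [left|right].
  all: by apply: nc_le (ltW e0) _; rewrite -e10.
Qed.

End PlaneGeometry.

Section Dynamics.
Variable R : realType.
Local Notation C := R[i].

Lemma sigmaM d z t : sigma d (z * t) = sigma d z * t ^+ d :> C.
Proof. exact: exprMn. Qed.

Lemma iter_sigmaM d n z t :
  iter n (sigma d) (z * t) = iter n (sigma d) z * t ^+ (d ^ n) :> C.
Proof. by elim: n => [|n ih] /=; rewrite ?expn0 ?expr1 // ih sigmaM -exprM expnSr. Qed.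

Lemma iter_sigma_eq d n z w : (0 < n)%N -> sigma d z = sigma d w ->
  iter n (sigma d) z = iter n (sigma d) w :> C.
Proof. by case: n => // n _ h; rewrite !iterSr h. Qed.

(* The polynomial [X^d - c] has at most [d] roots, so [d] distinct roots
   exhaust them. *)
Lemma roots_exhaust d (c z : C) (P : 'I_d -> C) : (0 < d)%N -> injective P ->
  (forall i, P i ^+ d = c) -> z ^+ d = c -> exists i, P i = z.
Proof.
move=> d0 Pinj hP hz; have [/existsP[i /eqP <-]|hn] := boolP [exists i, P i == z].
  by exists i.
have uniq_roots : uniq (z :: [seq P i | i <- enum 'I_d]).
  rewrite /= map_inj_uniq ?enum_uniq // andbT; apply/mapP => -[i _ hi].
  by move/existsP: hn; apply; exists i; rewrite hi.
have hroots : all (root ('X^d - c%:P)) (z :: [seq P i | i <- enum 'I_d]).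
  apply/allP => w; rewrite inE /root !hornerE => /orP[/eqP ->|/mapP[i _ ->]].
  - by rewrite hz subrr.
  - by rewrite hP subrr.
have hp : 'X^d - c%:P != 0 :> {poly C} by rewrite -size_poly_gt0 size_XnsubC.
by have := max_poly_roots hp hroots uniq_roots; rewrite size_XnsubC //= size_map size_enum_ord ltnn.
Qed.

End Dynamics.

Lemma sum_bool_neq (I : finType) (A B : I -> bool) (j : I) :
  (forall i, i != j -> A i = B i) -> A j != B j -> \sum_i (A i : nat) != \sum_i (B i : nat).
Proof.
move=> hAB hj; rewrite (bigD1 j) // [X in _ != X](bigD1 j) //=.
rewrite (eq_bigr _ (fun i hi => congr1 nat_of_bool (hAB i hi))) eqn_add2r.
by case: (A j) (B j) hj => -[].
Qed.

Lemma exists_min_gt0 (R : realType) (T : finType) (F : T -> R) :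
  (forall t, 0 < F t) -> exists2 m : R, 0 < m & forall t, m <= F t.
Proof.
move=> hF; exists (\big[Num.min/1]_t F t).
  by apply: (big_ind (fun m : R => 0 < m)) => // s1 s2 h1 h2; rewrite lt_min h1 h2.
by move=> t; rewrite (bigD1 t) //= ge_min lexx.
Qed.

Lemma leafC (R : realType) (L : R[i] -> R[i] -> Prop) (a b : R[i]) : leaf L a b -> leaf L b a.
Proof. by case=> h; [right|left]. Qed.

Lemma isolated_of_near (R : realType) (L : R[i] -> R[i] -> Prop) (x y : R[i]) :
  normsq x = 1 -> normsq y = 1 -> x <> y ->
  (forall a b, leaf L a b -> normsq a = 1 /\ normsq b = 1) ->
  (exists2 eps : R, 0 < eps & forall a b, leaf L a b ->
     Normc.normc (a - x) <= eps -> Normc.normc (b - y) <= eps -> same_chord a b x y) ->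
  isolated L x y.
Proof.
move=> hx hy xy hunit [eps eps0 hnear] [u [hu hlim]].
have hxy : 0 < Normc.normc (x - y).
  by rewrite normcE sqrtr_gt0 normsqB_gt0.
pose e := Num.min eps (Num.min 1 (Normc.normc (x - y) / 3)).
have e0 : 0 < e by rewrite !lt_min eps0 ltr01 divr_gt0.
have [e_eps e1 e3] : [/\ e <= eps, e <= 1 & e <= Normc.normc (x - y) / 3].
  by rewrite !ge_min !lexx !orbT.
have far c : Normc.normc (c - x) <= e -> Normc.normc (c - y) <= e -> False.
  move=> h1 h2; have := le_normcD (x - c) (c - y).
  have -> : Normc.normc (x - c) = Normc.normc (c - x) by rewrite -normcN opprB.
  by rewrite addrA subrK; lra.
have [n hn] := hlim (e ^+ 2 / 10) (divr_gt0 (exprn_gt0 2 e0) (ltr0n _ 10)).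
have [lab nab] := hu n; have [ha hb] := hunit _ _ lab.
have he : 0 < e <= 1 by rewrite e0.
have [hax|hbx] := hclose_near_end ha hb hx he (hn n (leqnn n)) (seg_left x y);
have [hay|hby] := hclose_near_end ha hb hy he (hn n (leqnn n)) (seg_right x y).
- exact: far hax hay.
- exact/nab/(hnear _ _ lab (le_trans hax e_eps) (le_trans hby e_eps)).
- apply: nab; have := hnear _ _ (leafC lab) (le_trans hbx e_eps) (le_trans hay e_eps).
  by case=> [[-> ->]|[-> ->]]; [right|left].
- exact: far hbx hby.
Qed.

Section IsolatedCriticalLeaf.
Variables (R : realType) (d : nat) (L : R[i] -> R[i] -> Prop) (x y : R[i]) (p : nat).
Local Notation C := R[i].
Local Notation Re := complex.Re.
Local Notation Im := complex.Im.
Local Notation nc := Normc.normc.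
Implicit Types (a b c e z t u v : C).

Hypothesis d_ge2 : (2 <= d)%N.
Hypothesis sibL : sibling_invariant d L.
Hypothesis leaf_xy : leaf L x y.
Hypothesis crit_xy : critical d x y.
Hypothesis p_gt0 : (0 < p)%N.
Hypothesis per_x : iter p (sigma d) x = x.

Local Notation N := (d ^ p)%N.
Local Notation K := (N * d)%N.

Lemma d_gt0 : (0 < d)%N. Proof. exact: leq_trans d_ge2. Qed.

Lemma d_le_N : (d <= N)%N.
Proof. by rewrite -{1}(expn1 d) leq_pexp2l // d_gt0. Qed.

Lemma N_le_K : (N <= K)%N. Proof. by rewrite leq_pmulr // d_gt0. Qed.

Lemma leaf_unit a b : leaf L a b -> normsq a = 1 /\ normsq b = 1.
Proof. by case: sibL => -[hcirc _ _ _] _ _ _ /hcirc [/on_circleE ? /on_circleE ?]. Qed.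

Lemma x_unit : normsq x = 1. Proof. exact: (leaf_unit leaf_xy).1. Qed.
Lemma y_unit : normsq y = 1. Proof. exact: (leaf_unit leaf_xy).2. Qed.

Lemma leaf_not_separated a b c e : leaf L a b -> leaf L c e ->
  ~ side a b c * side a b e < 0.
Proof.
case: sibL => -[_ hnc _ _] _ _ _ lab lce hneg.
have [ha hb] := leaf_unit lab; have [hc he] := leaf_unit lce.
exact: hnc _ _ _ _ lab lce (cross_of_side ha hb hc he hneg).
Qed.

Lemma leaf_same_side a b c e : leaf L a b -> leaf L c e ->
  side a b c != 0 -> side a b e != 0 -> 0 < side a b c * side a b e.
Proof.
move=> lab lce hc he; rewrite lt_def mulf_neq0 //= leNgt; apply/negP.
exact: leaf_not_separated.
Qed.

Lemma leaf_iter a b : leaf L a b -> leaf L (iter p (sigma d) a) (iter p (sigma d) b).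
Proof. by case: sibL => _ himg _ _ lab; elim: p => //= n ih; apply: himg. Qed.

Lemma iter_x_rot t : iter p (sigma d) (x * t) = x * t ^+ N.
Proof. by rewrite iter_sigmaM per_x. Qed.

Lemma iter_y_rot t : iter p (sigma d) (y * t) = x * t ^+ N.
Proof. by rewrite iter_sigmaM (iter_sigma_eq p_gt0 (esym crit_xy.2)) per_x. Qed.

(* Orient each sibling so that its first endpoint maps to [sigma d a];
   disjointness of the siblings makes both endpoint maps injective. *)
Lemma sibling_ends a b : leaf L a b -> ~ critical d a b ->
  exists P Q : 'I_d -> C, exists i0 : 'I_d,
  [/\ injective P, injective Q, P i0 = a /\ Q i0 = b,
      forall i, leaf L (P i) (Q i) &
      forall i, sigma d (P i) = sigma d a /\ sigma d (Q i) = sigma d b].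
Proof.
case: sibL => _ _ _ hsib lab ncrit; have [f [hleaf hf0 hdisj himg]] := hsib a b lab ncrit.
pose P i := if sigma d (f i).1 == sigma d a then (f i).1 else (f i).2.
pose Q i := if sigma d (f i).1 == sigma d a then (f i).2 else (f i).1.
have PQ i : [/\ seg (f i).1 (f i).2 (P i), seg (f i).1 (f i).2 (Q i), leaf L (P i) (Q i)
    & sigma d (P i) = sigma d a /\ sigma d (Q i) = sigma d b].
  rewrite /P /Q; case: (himg i) => -[e1 e2]; rewrite e1 ?eqxx.
    by split; rewrite ?e2 //; [exact: seg_left | exact: seg_right].
  have [ab|nab] := eqVneq (sigma d b) (sigma d a).
    by split; [exact: seg_left | exact: seg_right | exact: hleaf | rewrite ?e1 ?e2 ab].
  by split => //; [exact: seg_right | exact: seg_left | exact: leafC].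
have disj_inj (F : 'I_d -> C) : (forall i, seg (f i).1 (f i).2 (F i)) -> injective F.
  move=> hF i j eij; apply/eqP/negPn/negP => /eqP nij.
  by apply: (hdisj i j nij (F i)); rewrite // eij.
exists P, Q, (Ordinal d_gt0); split.
- by apply: disj_inj => i; case: (PQ i).
- by apply: disj_inj => i; case: (PQ i).
- rewrite /P /Q; case: (hf0 (Ordinal d_gt0) erefl) => -[-> ->]; rewrite ?eqxx //.
  case: eqP => // hba; have [ab|nab] := eqVneq a b; first by rewrite ab.
  by case: ncrit; split; [exact/eqP | exact/esym].
- by move=> i; case: (PQ i).
- by move=> i; case: (PQ i).
Qed.

Lemma gap_xy_gt0 : 0 < 1 - dotc x y.
Proof.
have := normsqB_gt0 crit_xy.1; rewrite normsqB_unit ?x_unit ?y_unit //.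
by rewrite pmulr_rgt0 ?ltr0n.
Qed.

Lemma gap_xy_le2 : 1 - dotc x y <= 2.
Proof. by have := detc_dotc x_unit y_unit; nra. Qed.

(* The preimages of [sigma d x] are read off the siblings of the degenerate
   leaf [xx]. *)
Lemma roots_off_xy : exists2 mu : R, 0 < mu & forall z, normsq z = 1 ->
  sigma d z = sigma d x -> z <> x -> z <> y -> mu <= `|side x y z|.
Proof.
have lxx : leaf L x x by case: sibL => -[_ _ hdeg _] _ _ _; apply/hdeg/on_circleE/x_unit.
have [P [Q [_ [Pinj _ _ hleaf hsig]]]] := sibling_ends lxx (fun hc => hc.1 erefl).
pose F i := if (P i == x) || (P i == y) then 1 else `|side x y (P i)|.
have [|mu mu0 hmu] := @exists_min_gt0 R _ F.
  move=> i; rewrite /F; case: ifP => [_|/norP[/eqP Px /eqP Py]]; first exact: ltr01.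
  rewrite normr_gt0 side_unit_neq0 ?x_unit ?y_unit //; first exact: (leaf_unit (hleaf i)).1.
  exact: crit_xy.1.
exists mu => // z hz hzx zx zy.
have [i Pi] := roots_exhaust (c := sigma d x) d_gt0 Pinj (fun i => (hsig i).1) hzx.
by have := hmu i; rewrite /F Pi; case: ifP => // /orP[/eqP|/eqP].
Qed.

Section NearbyLeaves.
Variables mu eps : R.
Hypothesis mu_gt0 : 0 < mu.
Hypothesis roots_far : forall z, normsq z = 1 -> sigma d z = sigma d x ->
  z <> x -> z <> y -> mu <= `|side x y z|.
Hypothesis eps_ge0 : 0 <= eps.
Hypothesis eps_gap : 16 * (K%:R * eps) <= 1 - dotc x y.
Hypothesis eps_mu : 16 * (K%:R * eps) <= mu.

(* [G] bounds the angles of all the rotations [u ^+ k], [k <= K], by which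
   the endpoints of a leaf [eps]-close to [xy] are turned under iteration. *)
Local Notation G := (K%:R * eps).

Lemma eps_le_G : eps <= G.
Proof. by rewrite ler_peMl // ler1n muln_gt0 expn_gt0 d_gt0. Qed.

Lemma G_le : G <= 1 / 8.
Proof. by have := eps_gap; have := gap_xy_le2; lra. Qed.

Lemma G_lt_gap : G < 1 - dotc x y.
Proof. by have := eps_gap; have := gap_xy_gt0; lra. Qed.

Lemma gap_near_x a : nc (a - x) <= eps -> G < 1 - dotc a y.
Proof.
have := dotc_near a x y_unit; rewrite ler_norml => /andP[h1 h2] hax.
by have := eps_gap; have := gap_xy_gt0; have := eps_le_G; lra.
Qed.

Lemma gap_near_y b : nc (b - y) <= eps -> G < 1 - dotc b x.
Proof.
have := dotc_near b y x_unit; rewrite ler_norml => /andP[h1 h2] hby.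
by have := eps_gap; have := gap_xy_gt0; have := eps_le_G; rewrite [dotc y x]dotcC in h1 h2; lra.
Qed.

Lemma N_gt1 : (1 < N)%N. Proof. exact: leq_trans d_ge2 d_le_N. Qed.

Lemma small_rot_pow u k : normsq u = 1 -> nc (u - 1) <= eps -> (k <= K)%N ->
  small_rot G (u ^+ k).
Proof.
move=> hu hu1 hk; apply: small_rot_expr => //; last by have := G_le; lra.
by apply: ler_pM; [exact: ler0n | exact: nc_ge0 | rewrite ler_nat | ].
Qed.

Lemma Im_pow_sign u k : normsq u = 1 -> nc (u - 1) <= eps -> Im u != 0 ->
  (0 < k <= K)%N -> 0 < Im u * Im (u ^+ k).
Proof.
move=> hu hu1 hIu hk; apply: (Im_expr_sign (K := K)) => //.
have : K%:R * nc (u - 1) <= G by apply: ler_wpM2l => //; exact: ler0n.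
by have := G_le; lra.
Qed.

Lemma Im_pow_neq0 u k : normsq u = 1 -> nc (u - 1) <= eps -> Im u != 0 ->
  (0 < k <= K)%N -> Im (u ^+ k) != 0.
Proof.
move=> hu hu1 hIu /(Im_pow_sign hu hu1 hIu).
by apply: contraTneq => ->; rewrite mulr0 ltxx.
Qed.

Lemma small_rot1 u : normsq u = 1 -> nc (u - 1) <= eps -> small_rot G u.
Proof.
move=> hu hu1; rewrite -[u]expr1; apply: small_rot_pow => //.
exact: leq_trans (ltnW N_gt1) N_le_K.
Qed.

Lemma side_x_turn u : normsq u = 1 -> nc (u - 1) <= eps -> Im u != 0 ->
  0 < side x y (x * u) * - Im u.
Proof.
move=> hu hu1 hIu; rewrite mulrN oppr_gt0.
exact: side_small_rot x_unit y_unit (small_rot1 hu hu1) G_lt_gap hIu.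
Qed.

Lemma side_y_turn v : normsq v = 1 -> nc (v - 1) <= eps -> Im v != 0 ->
  0 < side x y (y * v) * Im v.
Proof.
move=> hv hv1 hIv; rewrite -oppr_lt0 -mulNr -sideC.
by apply: side_small_rot y_unit x_unit (small_rot1 hv hv1) _ hIv; rewrite dotcC G_lt_gap.
Qed.

(* The leaf from [xu] to [yv] would cross [xy]. *)
Lemma no_leaf_turn_same u v : normsq u = 1 -> normsq v = 1 -> nc (u - 1) <= eps ->
  nc (v - 1) <= eps -> leaf L (x * u) (y * v) -> 0 < Im u * Im v -> False.
Proof.
move=> hu hv hu1 hv1 luv huv.
have hIu : Im u != 0 by apply: contraTneq huv => ->; rewrite mul0r ltxx.
have hIv : Im v != 0 by apply: contraTneq huv => ->; rewrite mulr0 ltxx.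
apply: (leaf_not_separated leaf_xy luv).
by rewrite (sign_transfer_lt0 (side_x_turn hu hu1 hIu) (side_y_turn hv hv1 hIv)) mulNr oppr_lt0.
Qed.

(* After [p] iterations the leaf from [xu] to [yv] becomes a short leaf
   at [x] whose endpoints lie on both sides of [xy]. *)
Lemma no_leaf_turn_opp u v : normsq u = 1 -> normsq v = 1 -> nc (u - 1) <= eps ->
  nc (v - 1) <= eps -> leaf L (x * u) (y * v) -> Im u * Im v < 0 -> False.
Proof.
move=> hu hv hu1 hv1 luv huv.
have hIu : Im u != 0 by apply: contraTneq huv => ->; rewrite mul0r ltxx.
have hIv : Im v != 0 by apply: contraTneq huv => ->; rewrite mulr0 ltxx.
have hN : (0 < N <= K)%N by rewrite N_le_K andbT ltnW // N_gt1.
have turn w : normsq w = 1 -> nc (w - 1) <= eps -> Im w != 0 ->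
    0 < side x y (x * w ^+ N) * - Im (w ^+ N).
  move=> hw hw1 hIw; rewrite mulrN oppr_gt0.
  apply: side_small_rot x_unit y_unit (small_rot_pow hw hw1 N_le_K) G_lt_gap _.
  exact: Im_pow_neq0.
have lN : leaf L (x * u ^+ N) (x * v ^+ N).
  by rewrite -iter_x_rot -iter_y_rot; apply: leaf_iter.
apply: (leaf_not_separated leaf_xy lN).
rewrite (sign_transfer_lt0 (turn _ hu hu1 hIu) (turn _ hv hv1 hIv)) mulrNN.
rewrite -(sign_transfer_lt0 (Im_pow_sign hu hu1 hIu hN) (Im_pow_sign hv hv1 hIv hN)).
exact: huv.
Qed.

(* [a t^*] and [a t ^+ N.-1] are small turns of [a] in opposite directions. *)
Lemma side_turn_back_forth a w t : normsq a = 1 -> normsq w = 1 -> G < 1 - dotc a w ->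
  normsq t = 1 -> nc (t - 1) <= eps -> Im t != 0 ->
  side a w (a * t^*) * side a w (a * t ^+ N.-1) < 0.
Proof.
move=> ha hw gap ht ht1 hIt.
have hN1 : (0 < N.-1 <= K)%N.
  by rewrite -ltnS prednK ?N_gt1 ?(ltnW N_gt1) // (leq_trans (leq_pred _) N_le_K).
have s1 : 0 < side a w (a * t^*) * Im t.
  rewrite -[Im t]opprK -ImJ mulrN oppr_gt0.
  apply: side_small_rot ha hw (small_rot_conj (small_rot1 ht ht1)) gap _.
  by rewrite ImJ oppr_eq0.
have s2 : 0 < side a w (a * t ^+ N.-1) * - Im (t ^+ N.-1).
  rewrite mulrN oppr_gt0; apply: side_small_rot ha hw _ gap (Im_pow_neq0 ht ht1 hIt hN1).
  exact: small_rot_pow ht ht1 (proj2 (andP hN1)).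
by rewrite (sign_transfer_lt0 s1 s2) mulrN oppr_lt0 Im_pow_sign.
Qed.

Lemma mul_turn_pred z t : z * t * t ^+ N.-1 = z * t ^+ N.
Proof. by rewrite -mulrA -exprS prednK // ltnW // N_gt1. Qed.

(* After [p] iterations the leaf from [xu] to [y] becomes the short leaf
   from [x u ^+ N] to [x], which the chord from [xu] to [y] separates. *)
Lemma no_leaf_turn_x u : normsq u = 1 -> nc (u - 1) <= eps -> Im u != 0 ->
  leaf L (x * u) y -> False.
Proof.
move=> hu hu1 hIu lay.
have ha : normsq (x * u) = 1 by rewrite normsqM x_unit hu mul1r.
have gap : G < 1 - dotc (x * u) y by apply: gap_near_x; rewrite ncB_rot ?x_unit.
have lN : leaf L x (x * u ^+ N).
  apply: leafC; have := leaf_iter lay.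
  by rewrite iter_x_rot (iter_sigma_eq p_gt0 (esym crit_xy.2)) per_x.
apply: (leaf_not_separated lay lN).
by have := side_turn_back_forth ha y_unit gap hu hu1 hIu; rewrite mulr_unitJK // mul_turn_pred.
Qed.

Section TurnAtY.
Variable v : C.
Hypothesis v_unit : normsq v = 1.
Hypothesis v_near1 : nc (v - 1) <= eps.
Hypothesis Im_v : Im v != 0.
Hypothesis leaf_xb : leaf L x (y * v).

Local Notation b := (y * v).
Local Notation eta := (v ^+ N).

Lemma b_unit : normsq b = 1. Proof. by rewrite normsqM y_unit v_unit mul1r. Qed.

Lemma pow_v_neq i j : (i < j <= K)%N -> v ^+ i != v ^+ j.
Proof.
case/andP=> hij hjK; rewrite -(subnKC (ltnW hij)) exprD -{1}[v ^+ i]mulr1.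
rewrite (inj_eq (mulfI (unit_neq0 (unit_expr i v_unit)))) eq_sym.
apply: contraTneq (Im_pow_neq0 (k := (j - i)%N) v_unit v_near1 Im_v _) => [->|].
  by rewrite eqxx.
by rewrite subn_gt0 hij (leq_trans (leq_subr _ _) hjK).
Qed.

Lemma sigma_b_x_xeta :
  [/\ sigma d b != sigma d x, sigma d (x * eta) != sigma d x & sigma d b != sigma d (x * eta)].
Proof.
have hx0 : sigma d x != 0 by apply/unit_neq0/unit_expr/x_unit.
have neq i j : (i < j <= K)%N -> sigma d x * v ^+ i != sigma d x * v ^+ j.
  by move=> hij; rewrite (inj_eq (mulfI hx0)) pow_v_neq.
have hK : (0 < K)%N by rewrite muln_gt0 expn_gt0 d_gt0.
have hdK' : (d < K)%N.
  by rewrite -{1}[d]mul1n ltn_mul2r d_gt0 (leq_trans _ d_le_N).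
rewrite sigmaM -crit_xy.2 sigmaM -exprM; split.
- rewrite -[X in _ != X]mulr1 -(expr0 v) eq_sym; apply: neq.
  by rewrite d_gt0 (ltnW hdK').
- by rewrite -[X in _ != X]mulr1 -(expr0 v) eq_sym; apply: neq; rewrite hK /=.
- by apply: neq; rewrite hdK' /=.
Qed.

Lemma leaf_x_xeta : leaf L x (x * eta).
Proof.
have := leaf_iter leaf_xb.
by rewrite -{1}[x]mulr1 !(iter_x_rot, iter_y_rot) expr1n mulr1.
Qed.

Lemma b_neq_x : b <> x.
Proof. by move=> bx; case: sigma_b_x_xeta; rewrite bx eqxx. Qed.

Lemma b_neq_y : b <> y.
Proof. by move=> bx; case: sigma_b_x_xeta; rewrite bx -crit_xy.2 eqxx. Qed.

Lemma side_xb_y_neq0 : side x b y != 0.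
Proof.
apply: side_unit_neq0; rewrite ?x_unit ?y_unit ?b_unit //.
- by move/esym; exact: b_neq_x.
- by move/esym; exact: crit_xy.1.
- by move/esym; exact: b_neq_y.
Qed.

Local Notation pos z := (0 < side x b z * side x b y).

Lemma pos_y_eta : ~~ pos (y * eta).
Proof.
have gap : G < 1 - dotc b x by apply: gap_near_y; rewrite ncB_rot ?y_unit.
have := side_turn_back_forth b_unit x_unit gap v_unit v_near1 Im_v.
by rewrite mulr_unitJK // mul_turn_pred !(sideC x b) mulrNN mulrC => /ltW; rewrite leNgt.
Qed.

(* A preimage [z] of [sigma d x] other than [x] and [y] is far from the
   chord [xb], close to [xy], hence turning it by [eta] keeps its side. *)
Lemma pos_root_eta z : normsq z = 1 -> sigma d z = sigma d x -> z <> x -> z <> y ->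
  pos (z * eta) = pos z.
Proof.
move=> hz hzx zx zy; apply: same_sign_gt0.
have hzx2 := ncB_unit_le2 hz x_unit; have hbx2 := ncB_unit_le2 b_unit x_unit.
have hby : nc (b - y) <= eps by rewrite ncB_rot ?y_unit.
have heta : nc (z * eta - z) <= G.
  rewrite ncB_rot //; apply: le_trans (ncB1_expr _ v_unit) _.
  by apply: ler_pM; [exact: ler0n | exact: nc_ge0 | rewrite ler_nat N_le_K | ].
rewrite mulrC; apply: near_sign_gt0 (side_near_b x y b z) (side_near_z x b z (z * eta)) _.
have : nc (b - x) * nc (z * eta - z) <= 2 * G by apply: ler_pM; rewrite ?nc_ge0.
have : nc (b - y) * nc (z - x) <= eps * 2 by apply: ler_pM; rewrite ?nc_ge0.
have := roots_far hz hzx zx zy; have := eps_le_G; have := eps_mu; have := mu_gt0; lra.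
Qed.

(* A sibling leaf of [x (x eta)] other than itself does not cross the leaf
   [xb], and none of its endpoints is on that chord. *)
Lemma pos_sibling c e : leaf L c e -> sigma d c = sigma d x ->
  sigma d e = sigma d (x * eta) -> c <> x -> pos c = pos e.
Proof.
move=> lce hc he cx; have [cu eu] := leaf_unit lce.
have [hbx hex hbe] := sigma_b_x_xeta.
have xb : x <> b by move/esym; exact: b_neq_x.
apply: same_sign_gt0; apply: leaf_same_side leaf_xb lce _ _.
- by apply: side_unit_neq0; rewrite ?x_unit ?b_unit // => cb; move: hbx; rewrite -cb hc eqxx.
- apply: side_unit_neq0; rewrite ?x_unit ?b_unit //.
  + by move=> ex; move: hex; rewrite -he ex eqxx.
  + by move=> eb; move: hbe; rewrite -eb he eqxx.
Qed.

(* Turning the preimages of [sigma d x] by [eta] moves only [y] to the other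
   side of [xb]. *)
Lemma no_leaf_turn_y : False.
Proof.
have [_ hex _] := sigma_b_x_xeta.
have ncrit : ~ critical d x (x * eta) by case=> _ /esym/eqP; rewrite (negbTE hex).
have [P [Q [i0 [Pinj Qinj [P0 Q0] hleaf hsig]]]] := sibling_ends leaf_x_xeta ncrit.
have [iy Py] := roots_exhaust (c := sigma d x) d_gt0 Pinj (fun i => (hsig i).1) (esym crit_xy.2).
have eta0 : eta != 0 by apply/unit_neq0/unit_expr.
have hpre i : exists j, Q j = P i * eta.
  apply: (roots_exhaust (c := sigma d (x * eta)) d_gt0 Qinj (fun j => (hsig j).2)).
  by rewrite -/(sigma d _) !sigmaM (hsig i).1.
have [perm hperm] := fin_all_exists hpre.
have perm_inj : injective perm.
  by move=> i j eij; apply: Pinj; apply: (mulIf eta0); rewrite -!hperm eij.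
have : \sum_i (pos (P i * eta) : nat) != \sum_i (pos (Q i) : nat).
  apply: (sum_bool_neq (j := iy)) => [i iiy|]; last first.
    rewrite Py (negbTE pos_y_eta) -(pos_sibling (hleaf iy)) ?(hsig iy).1 ?(hsig iy).2 //.
      by rewrite Py lt_def mulf_neq0 ?side_xb_y_neq0 //= -expr2 sqr_ge0.
    by rewrite Py => /esym; exact: crit_xy.1.
  have [->|ii0] := eqVneq i i0; first by rewrite P0 Q0.
  have Pix : P i <> x by move=> Pi; move: ii0; rewrite -(Pinj _ _ (etrans Pi (esym P0))) eqxx.
  have Piy : P i <> y by move=> Pi; move: iiy; rewrite -(Pinj _ _ (etrans Pi (esym Py))) eqxx.
  rewrite pos_root_eta ?(hsig i).1 ?(leaf_unit (hleaf i)).1 //.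
  by apply: pos_sibling; rewrite ?(hsig i).1 ?(hsig i).2.
suff -> : \sum_i (pos (Q i) : nat) = \sum_i (pos (P i * eta) : nat) by rewrite eqxx.
by rewrite (reindex_inj perm_inj); apply: eq_bigr => i _; rewrite hperm.
Qed.

End TurnAtY.

Lemma no_leaf_near a b : leaf L a b -> ~ same_chord a b x y ->
  nc (a - x) <= eps -> nc (b - y) <= eps -> False.
Proof.
move=> lab nxy hax hby; have [ha hb] := leaf_unit lab.
have hu : normsq (a * x^*) = 1 by rewrite normsqM normsqJ ha x_unit mulr1.
have hv : normsq (b * y^*) = 1 by rewrite normsqM normsqJ hb y_unit mulr1.
have hu1 : nc (a * x^* - 1) <= eps by rewrite nc_rotB1 ?x_unit.
have hv1 : nc (b * y^* - 1) <= eps by rewrite nc_rotB1 ?y_unit.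
rewrite -(unit_rotK a x_unit) -(unit_rotK b y_unit) in lab nxy.
move: (a * x^*) (b * y^*) hu hv hu1 hv1 lab nxy => u v hu hv hu1 hv1 luv nxy.
have [_ hRu _] := small_rot1 hu hu1; have [_ hRv _] := small_rot1 hv hv1.
have [Iu0|Iu0] := eqVneq (Im u) 0; have [Iv0|Iv0] := eqVneq (Im v) 0.
- by apply: nxy; left; rewrite (unit_Im0 hu hRu Iu0) (unit_Im0 hv hRv Iv0) !mulr1.
- by apply: (no_leaf_turn_y hv hv1 Iv0); rewrite -[x]mulr1 -(unit_Im0 hu hRu Iu0).
- by apply: (no_leaf_turn_x hu hu1 Iu0); rewrite -[y]mulr1 -(unit_Im0 hv hRv Iv0).
- case: (ltrgtP (Im u * Im v) 0) => [neg|pos|/eqP].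
  + exact: no_leaf_turn_opp hu hv hu1 hv1 luv neg.
  + exact: no_leaf_turn_same hu hv hu1 hv1 luv pos.
  + by rewrite mulf_eq0 (negbTE Iu0) (negbTE Iv0).
Qed.

End NearbyLeaves.

Lemma leaf_near_xy : exists2 eps : R, 0 < eps & forall a b, leaf L a b ->
  nc (a - x) <= eps -> nc (b - y) <= eps -> same_chord a b x y.
Proof.
have [mu mu0 hmu] := roots_off_xy.
have hK : 0 < K%:R :> R by rewrite ltr0n muln_gt0 expn_gt0 d_gt0.
have hm : 0 < Num.min (1 - dotc x y) mu by rewrite lt_min gap_xy_gt0.
pose eps := Num.min (1 - dotc x y) mu / (16 * K%:R).
have eps0 : 0 < eps by rewrite divr_gt0 // mulr_gt0.
have hKeps : 16 * (K%:R * eps) = Num.min (1 - dotc x y) mu.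
  by rewrite /eps mulrA mulrC divfK // mulf_neq0 // gt_eqF.
exists eps => // a b lab hax hby; have [//|nxy] := pselect (same_chord a b x y).
have [hg hmu'] : 16 * (K%:R * eps) <= 1 - dotc x y /\ 16 * (K%:R * eps) <= mu.
  by rewrite hKeps ge_min lexx ge_min lexx orbT.
by case: (no_leaf_near mu0 hmu (ltW eps0) hg hmu' lab nxy hax hby).
Qed.

End IsolatedCriticalLeaf.

Theorem lemmal (R : realType) (d : nat) (L : R[i] -> R[i] -> Prop) (x y : R[i]) :
  (2 <= d)%N -> sibling_invariant d L -> leaf L x y -> critical d x y ->
  periodic d x -> isolated L x y.
Proof.
move=> d_ge2 sibL lxy crit [p [p_gt0 per_x]].
apply: isolated_of_near (x_unit sibL lxy) (y_unit sibL lxy) crit.1 (leaf_unit sibL) _.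
exact: leaf_near_xy d_ge2 sibL lxy crit p_gt0 per_x.
Qed.
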